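(* Assume (H1). Let $\mathcal H=\begin{pmatrix}A+G&\gamma I\\-\widehat Q&-(A+G)^T\end{pmatrix}\in\mathbb R^{2n\times 2n}$ and $\Phi(t)=e^{\mathcal Ht}=\begin{pmatrix}\Phi_{11}(t)&\Phi_{12}(t)\\\Phi_{21}(t)&\Phi_{22}(t)\end{pmatrix}$ with $n\times n$ blocks. Then $\Phi_{22}(T)-H\Phi_{12}(T)$ is nonsingular.
   Context: Fix $n\ge1$, $T>0$, constant matrices $A,G,\Gamma\in\mathbb R^{n\times n}$, $\gamma>0$, symmetric $Q\ge0$, $H\ge0$ ($n\times n$). Write $\widehat Q=(I-\Gamma)^TQ(I-\Gamma)$ and $\|h\|_{L^2}=(\int_0^T|h|^2dt)^{1/2}$. For $g\in L^2(0,T;\mathbb R^n)$ let $\dot z=(A+G)z+g$, $z(0)=0$, and $\bar J''(g)=\int_0^T\{-z^T\widehat Qz+\frac1\gamma|g|^2\}dt-z(T)^THz(T)$. (H1): there exists $\epsilon_0>0$ with $\bar J''(g)\ge\epsilon_0\|g\|_{L^2}^2$ for all $g\in L^2(0,T;\mathbb R^n)$. *)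

From Stdlib Require Import Reals Lra ClassicalEpsilon Factorial.
Open Scope R_scope.

(* Vectors in R^m are functions nat -> R (only indices < m matter);
   m x m matrices are functions nat -> nat -> R (only indices < m matter). *)
Definition vec := nat -> R.
Definition mat := nat -> nat -> R.

Fixpoint rsum (m : nat) (f : nat -> R) : R :=
  match m with O => 0 | S k => rsum k f + f k end.

Definition delta (i j : nat) : R := if Nat.eqb i j then 1 else 0.
Definition mat_id : mat := fun i j => delta i j.
Definition mat_add (A B : mat) : mat := fun i j => A i j + B i j.
Definition mat_sub (A B : mat) : mat := fun i j => A i j - B i j.
Definition mat_opp (A : mat) : mat := fun i j => - A i j.
Definition mat_tr (A : mat) : mat := fun i j => A j i.
Definition mat_mul (m : nat) (A B : mat) : mat :=
  fun i j => rsum m (fun k => A i k * B k j).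
Definition mat_vec (m : nat) (A : mat) (x : vec) : vec :=
  fun i => rsum m (fun k => A i k * x k).
Fixpoint mat_pow (m : nat) (A : mat) (k : nat) : mat :=
  match k with O => mat_id | S k' => mat_mul m A (mat_pow m A k') end.

Definition qform (m : nat) (M : mat) (x : vec) : R :=
  rsum m (fun i => rsum m (fun j => x i * M i j * x j)).
Definition sqnorm (m : nat) (x : vec) : R := rsum m (fun i => x i * x i).

Definition symmetric (m : nat) (M : mat) : Prop :=
  forall i j, (i < m)%nat -> (j < m)%nat -> M i j = M j i.
Definition psd (m : nat) (M : mat) : Prop := forall x, 0 <= qform m M x.

Definition nonsingular (m : nat) (M : mat) : Prop :=
  exists N : mat, forall i j, (i < m)%nat -> (j < m)%nat ->
    mat_mul m N M i j = delta i j /\ mat_mul m M N i j = delta i j.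

Definition matexp (m : nat) (M : mat) (t : R) : mat :=
  fun i j => epsilon (inhabits 0)
    (fun l => infinite_sum (fun k => t ^ k / INR (fact k) * mat_pow m M k i j) l).

Definition Qhat (n : nat) (Gm Q : mat) : mat :=
  mat_mul n (mat_tr (mat_sub mat_id Gm)) (mat_mul n Q (mat_sub mat_id Gm)).

(* the 2n x 2n Hamiltonian matrix [[A+G, gamma I]; [-Qhat, -(A+G)^T]] *)
Definition Hcal (n : nat) (A G Gm Q : mat) (gamma : R) : mat :=
  fun i j =>
    if Nat.ltb i n then
      (if Nat.ltb j n then mat_add A G i j else gamma * delta i (j - n)%nat)
    else
      (if Nat.ltb j n then - Qhat n Gm Q (i - n)%nat j
       else - mat_add A G (j - n)%nat (i - n)%nat).

Definition blk12 (n : nat) (P : mat) : mat := fun i j => P i (j + n)%nat.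
Definition blk22 (n : nat) (P : mat) : mat := fun i j => P (i + n)%nat (j + n)%nat.

(* Hypothesis (H1), quantified over continuous controls g:
   for g continuous and z the solution of z' = (A+G) z + g, z(0) = 0,
   Jbar''(g) = int_0^T (- z^T Qhat z + |g|^2/gamma) dt - z(T)^T H z(T)
   >= eps0 * ||g||_{L^2}^2. *)
Definition H1 (n : nat) (T : R) (A G Gm : mat) (gamma : R) (Q H : mat) : Prop :=
  exists eps0 : R, 0 < eps0 /\
    forall (g z : R -> vec),
      (forall i, (i < n)%nat -> continuity (fun t => g t i)) ->
      (forall i t, (i < n)%nat ->
         derivable_pt_lim (fun s => z s i) t
           (mat_vec n (mat_add A G) (z t) i + g t i)) ->
      (forall i, (i < n)%nat -> z 0 i = 0) ->
      forall (prJ : Riemann_integrable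
                (fun t => - qform n (Qhat n Gm Q) (z t) + / gamma * sqnorm n (g t)) 0 T)
             (prg : Riemann_integrable (fun t => sqnorm n (g t)) 0 T),
        RiemannInt prJ - qform n H (z T) >= eps0 * RiemannInt prg.

(* Let v lie in the kernel of Phi22(T) - H Phi12(T) and put (z(t), p(t)) := Phi(t) (0, v).
   This solves the Hamiltonian system z' = (A+G) z + gamma p, p' = - Qhat z - (A+G)^T p
   with z(0) = 0 and p(T) = H z(T), and along it
   d/dt <z, p> = - z^T Qhat z + gamma |p|^2.
   Hence for the control g = gamma p, whose state is z, the functional Jbar''(g) equals
   <z(T), p(T)> - z(T)^T H z(T) = 0, so (H1) forces the continuous function |g|^2 to have
   zero integral, and g(0) = gamma v = 0.  A square matrix with trivial kernel is invertible. *)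

From Stdlib Require Import Reals Lra Lia ClassicalEpsilon Factorial.
From Coquelicot Require Import Coquelicot.
From mathcomp Require all_boot all_algebra Rstruct.
Open Scope R_scope.

Lemma rsum_ext m f g : (forall k, (k < m)%nat -> f k = g k) -> rsum m f = rsum m g.
Proof. induction m; simpl; intros Hfg; auto. rewrite IHm, Hfg; auto. Qed.

Lemma rsum_zero m : rsum m (fun _ => 0) = 0.
Proof. induction m; simpl; [ring | rewrite IHm; ring]. Qed.

Lemma rsum_plus m f g : rsum m (fun k => f k + g k) = rsum m f + rsum m g.
Proof. induction m; simpl; [ring | rewrite IHm; ring]. Qed.

Lemma rsum_opp m f : rsum m (fun k => - f k) = - rsum m f.
Proof. induction m; simpl; [ring | rewrite IHm; ring]. Qed.

Lemma rsum_minus m f g : rsum m (fun k => f k - g k) = rsum m f - rsum m g.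
Proof. induction m; simpl; [ring | rewrite IHm; ring]. Qed.

Lemma rsum_scal m c f : rsum m (fun k => c * f k) = c * rsum m f.
Proof. induction m; simpl; [ring | rewrite IHm; ring]. Qed.

Lemma rsum_swap m p f :
  rsum m (fun i => rsum p (fun j => f i j)) = rsum p (fun j => rsum m (fun i => f i j)).
Proof.
  induction m; simpl; [symmetry; apply rsum_zero |].
  rewrite IHm, <- rsum_plus; reflexivity.
Qed.

Lemma rsum_add a b f : rsum (a + b) f = rsum a f + rsum b (fun k => f (a + k)%nat).
Proof.
  induction b; simpl; [rewrite Nat.add_0_r; ring |].
  rewrite Nat.add_succ_r; simpl; rewrite IHb; ring.
Qed.

Lemma rsum_delta m i x : (i < m)%nat -> rsum m (fun k => delta i k * x k) = x i.
Proof.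
  induction m; intros Hi; simpl; [lia |].
  unfold delta at 2; destruct (Nat.eqb_spec i m) as [-> | Hne].
  - rewrite (rsum_ext _ _ (fun _ => 0)), rsum_zero; [ring |].
    intros k Hk; unfold delta; destruct (Nat.eqb_spec m k); [lia | ring].
  - rewrite IHm by lia; ring.
Qed.

Lemma rsum_le m f g : (forall k, (k < m)%nat -> f k <= g k) -> rsum m f <= rsum m g.
Proof. induction m; simpl; intros Hfg; [lra |]. apply Rplus_le_compat; auto. Qed.

Lemma rsum_nonneg m f : (forall k, (k < m)%nat -> 0 <= f k) -> 0 <= rsum m f.
Proof. intros Hf; rewrite <- (rsum_zero m); apply rsum_le; auto. Qed.

Lemma rsum_abs m f : Rabs (rsum m f) <= rsum m (fun k => Rabs (f k)).
Proof.
  induction m; simpl; [rewrite Rabs_R0; lra |].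
  eapply Rle_trans; [apply Rabs_triang | lra].
Qed.

Lemma rsum_term_le m f j :
  (forall k, (k < m)%nat -> 0 <= f k) -> (j < m)%nat -> f j <= rsum m f.
Proof.
  induction m; simpl; intros Hf Hj; [lia |].
  pose proof (rsum_nonneg m f (fun k Hk => Hf k ltac:(lia))).
  destruct (Nat.eq_dec j m) as [-> | Hne]; [lra |].
  pose proof (IHm (fun k Hk => Hf k ltac:(lia)) ltac:(lia)); pose proof (Hf m ltac:(lia)); lra.
Qed.

Lemma mat_vec_ext m P x y i :
  (forall k, (k < m)%nat -> x k = y k) -> mat_vec m P x i = mat_vec m P y i.
Proof. intros Hxy; apply rsum_ext; intros k Hk; rewrite Hxy; auto. Qed.

Lemma mat_vec_sub m P P' x i : mat_vec m (mat_sub P P') x i = mat_vec m P x i - mat_vec m P' x i.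
Proof. unfold mat_vec, mat_sub; rewrite <- rsum_minus; apply rsum_ext; intros; ring. Qed.

Lemma mat_vec_mul m P P' x i : mat_vec m (mat_mul m P P') x i = mat_vec m P (mat_vec m P' x) i.
Proof.
  unfold mat_vec, mat_mul.
  rewrite (rsum_ext _ _ (fun k => rsum m (fun l => P i l * P' l k * x k)))
    by (intros; rewrite Rmult_comm, <- rsum_scal; apply rsum_ext; intros; ring).
  rewrite rsum_swap; apply rsum_ext; intros; rewrite <- rsum_scal; apply rsum_ext; intros; ring.
Qed.

Lemma rsum_mat_vec_tr m (B : mat) x y :
  rsum m (fun i => mat_vec m B x i * y i) = rsum m (fun i => x i * mat_vec m (mat_tr B) y i).
Proof.
  unfold mat_vec, mat_tr.
  rewrite (rsum_ext _ _ (fun i => rsum m (fun k => B i k * x k * y i)))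
    by (intros; rewrite Rmult_comm, <- rsum_scal; apply rsum_ext; intros; ring).
  rewrite rsum_swap; apply rsum_ext; intros; rewrite <- rsum_scal; apply rsum_ext; intros; ring.
Qed.

Lemma qform_mat_vec m M x : qform m M x = rsum m (fun i => x i * mat_vec m M x i).
Proof.
  unfold qform, mat_vec; apply rsum_ext; intros; rewrite <- rsum_scal; apply rsum_ext; intros; ring.
Qed.

Lemma sqnorm_scal m c x : sqnorm m (fun i => c * x i) = c ^ 2 * sqnorm m x.
Proof. unfold sqnorm; rewrite <- rsum_scal; apply rsum_ext; intros; ring. Qed.

Lemma ltb_lt_true i n : (i < n)%nat -> Nat.ltb i n = true.
Proof. apply Nat.ltb_lt. Qed.

Lemma ltb_add_r_false n i : Nat.ltb (n + i) n = false.
Proof. apply Nat.ltb_ge; lia. Qed.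

Definition embed_bottom (n : nat) (v : vec) : vec :=
  fun k => if Nat.ltb k n then 0 else v (k - n)%nat.

Lemma embed_bottom_top n v i : (i < n)%nat -> embed_bottom n v i = 0.
Proof. intros Hi; unfold embed_bottom; rewrite ltb_lt_true; auto. Qed.

Lemma embed_bottom_bottom n v i : embed_bottom n v (i + n)%nat = v i.
Proof.
  unfold embed_bottom; rewrite Nat.add_comm, ltb_add_r_false; f_equal; lia.
Qed.

Lemma mat_vec_embed_bottom n P v i :
  mat_vec (2 * n) P (embed_bottom n v) i = mat_vec n (fun r k => P r (k + n)%nat) v i.
Proof.
  unfold mat_vec; replace (2 * n)%nat with (n + n)%nat by lia; rewrite rsum_add.
  rewrite (rsum_ext n _ (fun _ => 0)), rsum_zero, Rplus_0_l
    by (intros k Hk; rewrite embed_bottom_top; [ring | auto]).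
  apply rsum_ext; intros k _; rewrite (Nat.add_comm n k), embed_bottom_bottom; reflexivity.
Qed.

Lemma is_series_zero : is_series (fun _ : nat => 0) 0.
Proof.
  apply is_series_Reals; intros eps Heps; exists 0%nat; intros k _.
  rewrite sum_cte, Rmult_0_l; unfold Rdist; rewrite Rminus_0_r, Rabs_R0; lra.
Qed.

Lemma is_series_rsum m (f : nat -> nat -> R) (L : nat -> R) :
  (forall l, (l < m)%nat -> is_series (f l) (L l)) ->
  is_series (fun k => rsum m (fun l => f l k)) (rsum m L).
Proof.
  induction m; intros Hf; simpl; [apply is_series_zero |].
  apply (is_series_plus (fun k => rsum m (fun l => f l k)) (f m)); auto.
Qed.

Section MatrixExponential.
Variables (m : nat) (M : mat).

Let c := rsum m (fun i => rsum m (fun j => Rabs (M i j))).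

Let c_ge0 : 0 <= c.
Proof. apply rsum_nonneg; intros; apply rsum_nonneg; intros; apply Rabs_pos. Qed.

Lemma mat_pow_entry_bound k i j :
  (i < m)%nat -> (j < m)%nat -> Rabs (mat_pow m M k i j) <= c ^ k.
Proof.
  assert (Hrow : forall i, (i < m)%nat -> rsum m (fun j => Rabs (M i j)) <= c).
  { intros i' Hi'; apply (rsum_term_le m (fun i => rsum m (fun j => Rabs (M i j)))); auto.
    intros; apply rsum_nonneg; intros; apply Rabs_pos. }
  revert i j; induction k; intros i j Hi Hj; simpl.
  - unfold mat_id, delta; destruct (Nat.eqb i j); rewrite ?Rabs_R1, ?Rabs_R0; lra.
  - eapply Rle_trans; [apply rsum_abs |].
    apply Rle_trans with (rsum m (fun l => c ^ k * Rabs (M i l))).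
    + apply rsum_le; intros l Hl; rewrite Rabs_mult, Rmult_comm.
      apply Rmult_le_compat_r; [apply Rabs_pos | auto].
    + rewrite rsum_scal, (Rmult_comm c); apply Rmult_le_compat_l; [apply pow_le |]; auto.
Qed.

Definition matexp_coef (i j k : nat) : R := mat_pow m M k i j / INR (fact k).

Lemma CV_radius_matexp_coef i j x :
  (i < m)%nat -> (j < m)%nat -> Rbar_lt (Rabs x) (CV_radius (matexp_coef i j)).
Proof.
  intros Hi Hj.
  assert (Hr : 0 < Rabs x + 1) by (pose proof (Rabs_pos x); lra).
  apply Rbar_lt_le_trans with (Finite (mkposreal _ Hr)); [simpl; lra |].
  apply CV_radius_Reals_1.
  exists (fun k => / INR (fact k) * (c * (Rabs x + 1)) ^ k), (exp (c * (Rabs x + 1))); split.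
  - (* dominated by the (nonnegative) exponential series at c (|x| + 1) *)
    assert (Hexp := proj1 (is_series_Reals _ _)
      (proj1 (is_pseries_R _ _ _) (is_exp_Reals (c * (Rabs x + 1))))).
    intros eps Heps; destruct (Hexp eps Heps) as [N HN]; exists N; intros k Hk.
    rewrite (sum_eq _ (fun k => / INR (fact k) * (c * (Rabs x + 1)) ^ k)); [exact (HN k Hk) |].
    intros l _; apply Rabs_pos_eq, Rmult_le_pos.
    + apply Rlt_le, Rinv_0_lt_compat, INR_fact_lt_0.
    + apply pow_le, Rmult_le_pos; [apply c_ge0 | lra].
  - intros k y Hy; unfold Boule in Hy; rewrite Rminus_0_r in Hy.
    unfold matexp_coef, Rdiv.
    rewrite !Rabs_mult, Rabs_inv, (Rabs_pos_eq (INR (fact k))) by apply pos_INR.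
    rewrite <- RPow_abs, Rpow_mult_distr.
    pose proof (Rinv_0_lt_compat _ (INR_fact_lt_0 k)).
    rewrite (Rmult_comm (Rabs (mat_pow m M k i j))), Rmult_assoc.
    apply Rmult_le_compat_l; [lra |].
    apply Rmult_le_compat; [apply Rabs_pos | apply pow_le, Rabs_pos
      | apply mat_pow_entry_bound; auto |].
    apply pow_incr; split; [apply Rabs_pos | simpl in Hy; lra].
Qed.

Lemma matexp_PSeries t i j :
  (i < m)%nat -> (j < m)%nat -> matexp m M t i j = PSeries (matexp_coef i j) t.
Proof.
  intros Hi Hj.
  assert (Hs : infinite_sum (fun k => t ^ k / INR (fact k) * mat_pow m M k i j)
                            (PSeries (matexp_coef i j) t)).
  { apply is_series_Reals.
    pose proof (PSeries_correct _ t (CV_radius_inside _ _ (CV_radius_matexp_coef i j t Hi Hj)))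
      as Hp.
    apply is_pseries_R in Hp; eapply is_series_ext; [| exact Hp].
    intros k; unfold matexp_coef; simpl; field; apply INR_fact_neq_0. }
  eapply uniqueness_sum; [| exact Hs].
  exact (epsilon_spec (inhabits 0) _ (ex_intro _ _ Hs)).
Qed.

Lemma matexp_0 i j : (i < m)%nat -> (j < m)%nat -> matexp m M 0 i j = delta i j.
Proof.
  intros Hi Hj; rewrite matexp_PSeries, PSeries_0 by auto.
  unfold matexp_coef; simpl; unfold mat_id, Rdiv; rewrite Rinv_1; apply Rmult_1_r.
Qed.

Lemma is_derive_matexp t i j : (i < m)%nat -> (j < m)%nat ->
  is_derive (fun s => matexp m M s i j) t (rsum m (fun l => M i l * matexp m M t l j)).
Proof.
  intros Hi Hj.
  apply (is_derive_ext (PSeries (matexp_coef i j)));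
    [intros s; symmetry; apply matexp_PSeries; auto |].
  replace (rsum m (fun l => M i l * matexp m M t l j))
    with (PSeries (PS_derive (matexp_coef i j)) t);
    [exact (is_derive_PSeries _ t (CV_radius_matexp_coef i j t Hi Hj)) |].
  apply is_pseries_unique, is_pseries_R.
  eapply is_series_ext;
    [| apply (is_series_rsum m (fun l k => M i l * (matexp_coef l j k * t ^ k)))].
  - (* (k+1) M^(k+1)/(k+1)! = M (M^k/k!) *)
    intros k; unfold PS_derive, matexp_coef; simpl mat_pow; unfold mat_mul.
    rewrite (rsum_ext _ _ (fun l => (/ INR (fact k) * t ^ k) * (M i l * mat_pow m M k l j)))
      by (intros; unfold Rdiv; ring).
    rewrite rsum_scal, fact_simpl, mult_INR.
    match goal with |- ?a = ?b => change (@eq R a b) end; field.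
    split; [apply INR_fact_neq_0 | apply not_0_INR; lia].
  - intros l Hl; rewrite matexp_PSeries by auto.
    apply (@is_series_scal_l R_AbsRing R_NormedModule (M i l)), is_pseries_R, PSeries_correct,
      CV_radius_inside, CV_radius_matexp_coef; auto.
Qed.

End MatrixExponential.

Lemma matexp_vec_0 m M w i : (i < m)%nat -> mat_vec m (matexp m M 0) w i = w i.
Proof.
  intros Hi; unfold mat_vec.
  rewrite (rsum_ext _ _ (fun k => delta i k * w k)) by (intros; rewrite matexp_0; auto).
  apply rsum_delta; auto.
Qed.

Lemma is_derive_rsum m (f : nat -> R -> R) (df : nat -> R) x :
  (forall k, (k < m)%nat -> is_derive (f k) x (df k)) ->
  is_derive (fun t => rsum m (fun k => f k t)) x (rsum m df).
Proof.
  induction m; intros Hf; simpl; [apply (is_derive_const (K := R_AbsRing) 0) |].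
  apply (is_derive_plus (fun t => rsum m (fun k => f k t)) (f m)); auto.
Qed.

Lemma is_derive_matexp_vec m M w t i : (i < m)%nat ->
  is_derive (fun s => mat_vec m (matexp m M s) w i) t
    (mat_vec m M (mat_vec m (matexp m M t) w) i).
Proof.
  intros Hi.
  assert (Hd := is_derive_rsum m (fun k s => matexp m M s i k * w k)
    (fun k => rsum m (fun l => M i l * matexp m M t l k) * w k) t
    (fun k Hk => is_derive_scal_l _ _ _ (w k) (is_derive_matexp m M t i k Hi Hk))).
  replace (mat_vec m M (mat_vec m (matexp m M t) w) i)
    with (rsum m (fun k => rsum m (fun l => M i l * matexp m M t l k) * w k)); [exact Hd |].
  unfold mat_vec; symmetry.
  rewrite (rsum_ext _ _ (fun l => rsum m (fun k => M i l * matexp m M t l k * w k)))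
    by (intros; rewrite <- rsum_scal; apply rsum_ext; intros; ring).
  rewrite rsum_swap; apply rsum_ext; intros k _.
  rewrite Rmult_comm, <- rsum_scal; apply rsum_ext; intros; ring.
Qed.

Lemma continuous_rsum m (f : nat -> R -> R) x :
  (forall k, (k < m)%nat -> continuous (f k) x) ->
  continuous (fun t => rsum m (fun k => f k t)) x.
Proof.
  induction m; intros Hf; simpl; [apply continuous_const |].
  apply (continuous_plus (fun t => rsum m (fun k => f k t)) (f m)); auto.
Qed.

Lemma continuous_qform m (M : mat) (x : R -> vec) t :
  (forall i, (i < m)%nat -> continuous (fun s => x s i) t) ->
  continuous (fun s => qform m M (x s)) t.
Proof.
  intros Hx; apply continuous_rsum; intros i Hi; apply continuous_rsum; intros j Hj.
  apply (continuous_mult (fun s => x s i * M i j)); auto.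
  apply (continuous_mult (fun s => x s i)); auto; apply continuous_const.
Qed.

Lemma continuous_sqnorm m (x : R -> vec) t :
  (forall i, (i < m)%nat -> continuous (fun s => x s i) t) ->
  continuous (fun s => sqnorm m (x s)) t.
Proof.
  intros Hx; apply continuous_rsum; intros i Hi; apply (continuous_mult (fun s => x s i)); auto.
Qed.

Lemma RInt_gt_0_of_pos_at_left (f : R -> R) a b :
  a < b -> (forall x, continuous f x) -> (forall x, 0 <= f x) -> 0 < f a -> 0 < RInt f a b.
Proof.
  intros Hab Hc Hnn Ha.
  destruct (proj2 (continuity_pt_filterlim f a) (Hc a) (f a / 2) ltac:(lra)) as [d [Hd Hnear]].
  set (c := Rmin (a + d / 2) b).
  assert (Hac : a < c) by (unfold c; apply Rmin_glb_lt; lra).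
  assert (Hcb : c <= b) by apply Rmin_r.
  assert (Hex : forall u v, ex_RInt f u v)
    by (intros; apply (@ex_RInt_continuous R_CompleteNormedModule); auto).
  rewrite <- (RInt_Chasles f a c b (Hex _ _) (Hex _ _)).
  assert (0 < RInt f a c).
  { apply RInt_gt_0; auto; intros x Hx.
    assert (Hfx : R_dist (f x) (f a) < f a / 2).
    { apply Hnear; split; [split; [exact I | lra] |].
      simpl; unfold R_dist; rewrite Rabs_pos_eq; unfold c in Hx;
        pose proof (Rmin_l (a + d / 2) b); lra. }
    unfold R_dist in Hfx; apply Rabs_def2 in Hfx; lra. }
  assert (0 <= RInt f c b) by (apply RInt_ge_0; auto).
  change (0 < RInt f a c + RInt f c b); lra.
Qed.

Section HamiltonianMatrix.
Variables (n : nat) (A G Gm Q : mat) (gamma : R).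
Let Hc := Hcal n A G Gm Q gamma.

Lemma mat_vec_Hcal_top x i : (i < n)%nat ->
  mat_vec (2 * n) Hc x i = mat_vec n (mat_add A G) x i + gamma * x (i + n)%nat.
Proof.
  intros Hi; unfold mat_vec; replace (2 * n)%nat with (n + n)%nat by lia.
  rewrite rsum_add; f_equal.
  - apply rsum_ext; intros k Hk; unfold Hc, Hcal; rewrite !ltb_lt_true; auto.
  - rewrite (rsum_ext _ _ (fun k => delta i k * (gamma * x (k + n)%nat)));
      [apply rsum_delta; auto |].
    intros k Hk; unfold Hc, Hcal; rewrite ltb_lt_true, ltb_add_r_false by auto.
    replace (n + k - n)%nat with k by lia; rewrite (Nat.add_comm n k); ring.
Qed.

Lemma mat_vec_Hcal_bottom x i : (i < n)%nat ->
  mat_vec (2 * n) Hc x (i + n)%nat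
  = - mat_vec n (Qhat n Gm Q) x i - mat_vec n (mat_tr (mat_add A G)) (fun k => x (k + n)%nat) i.
Proof.
  intros Hi; unfold mat_vec; replace (2 * n)%nat with (n + n)%nat by lia.
  rewrite rsum_add.
  rewrite (rsum_ext _ _ (fun k => - (Qhat n Gm Q i k * x k))).
  2:{ intros k Hk; unfold Hc, Hcal.
      rewrite <- (Nat.add_comm n i), ltb_add_r_false, ltb_lt_true by auto.
      replace (n + i - n)%nat with i by lia; ring. }
  rewrite (rsum_ext n (fun k => Hc (i + n)%nat (n + k)%nat * x (n + k)%nat)
    (fun k => - (mat_tr (mat_add A G) i k * x (k + n)%nat))).
  2:{ intros k Hk; unfold Hc, Hcal, mat_tr; rewrite <- (Nat.add_comm n i), !ltb_add_r_false.
      replace (n + i - n)%nat with i by lia; replace (n + k - n)%nat with k by lia.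
      rewrite (Nat.add_comm n k); ring. }
  rewrite !rsum_opp; ring.
Qed.

Lemma Hcal_pairing x :
  rsum n (fun i => mat_vec (2 * n) Hc x i * x (i + n)%nat + x i * mat_vec (2 * n) Hc x (i + n)%nat)
  = - qform n (Qhat n Gm Q) x + gamma * sqnorm n (fun i => x (i + n)%nat).
Proof.
  set (p := fun i => x (i + n)%nat).
  rewrite (rsum_ext _ _ (fun i => (mat_vec n (mat_add A G) x i * p i + gamma * (p i * p i))
      - (x i * mat_vec n (Qhat n Gm Q) x i + x i * mat_vec n (mat_tr (mat_add A G)) p i))).
  2:{ intros i Hi; rewrite mat_vec_Hcal_top, mat_vec_Hcal_bottom by auto; unfold p; ring. }
  rewrite rsum_minus, !rsum_plus, rsum_scal, rsum_mat_vec_tr, qform_mat_vec; unfold sqnorm; ring.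
Qed.

End HamiltonianMatrix.

(* X t = (z(t), p(t)): entries below n are the state, entries n .. 2n-1 the costate. *)
Section HamiltonianFlow.
Variables (n : nat) (A G Gm Q : mat) (gamma : R) (X : R -> vec).
Let Hc := Hcal n A G Gm Q gamma.
Hypothesis X_derive : forall i t, (i < 2 * n)%nat ->
  is_derive (fun s => X s i) t (mat_vec (2 * n) Hc (X t) i).

Lemma continuous_flow i t : (i < 2 * n)%nat -> continuous (fun s => X s i) t.
Proof.
  intros Hi; apply (@ex_derive_continuous R_AbsRing R_NormedModule).
  eexists; apply X_derive; auto.
Qed.

Definition flow_lagrangian (t : R) : R :=
  - qform n (Qhat n Gm Q) (X t) + gamma * sqnorm n (fun i => X t (i + n)%nat).

Lemma is_derive_flow_pairing t :
  is_derive (fun s => rsum n (fun i => X s i * X s (i + n)%nat)) t (flow_lagrangian t).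
Proof.
  unfold flow_lagrangian; rewrite <- (Hcal_pairing n A G Gm Q gamma (X t)).
  apply is_derive_rsum; intros i Hi.
  apply (is_derive_mult (fun s => X s i) (fun s => X s (i + n)%nat)); [| | apply Rmult_comm];
    apply X_derive; lia.
Qed.

Lemma continuous_flow_lagrangian t : continuous flow_lagrangian t.
Proof.
  apply (continuous_plus (fun t => - qform n (Qhat n Gm Q) (X t))).
  - apply (continuous_opp (fun t => qform n (Qhat n Gm Q) (X t))), continuous_qform.
    intros; apply continuous_flow; lia.
  - apply (continuous_mult (fun _ => gamma)); [apply continuous_const |].
    apply (continuous_sqnorm n (fun t i => X t (i + n)%nat)); intros; apply continuous_flow; lia.
Qed.

Variables (T : R) (H : mat).
Hypothesis state_0 : forall i, (i < n)%nat -> X 0 i = 0.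
Hypothesis costate_T : forall i, (i < n)%nat -> X T (i + n)%nat = mat_vec n H (X T) i.

Lemma RInt_flow_lagrangian : RInt flow_lagrangian 0 T = qform n H (X T).
Proof.
  rewrite (is_RInt_unique _ _ _ _ (is_RInt_derive _ _ 0 T
    (fun t _ => is_derive_flow_pairing t) (fun t _ => continuous_flow_lagrangian t))).
  rewrite qform_mat_vec, (rsum_ext n (fun i => X 0 i * _) (fun _ => 0)), rsum_zero
    by (intros i Hi; rewrite state_0; [ring | auto]).
  unfold minus, plus, opp; simpl; rewrite Ropp_0, Rplus_0_r.
  apply rsum_ext; intros i Hi; rewrite costate_T; auto.
Qed.

Hypotheses (hT : 0 < T) (hgamma : 0 < gamma) (hH1 : H1 n T A G Gm gamma Q H).

Lemma H1_flow_control_energy :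
  RInt (fun t => sqnorm n (fun i => gamma * X t (i + n)%nat)) 0 T <= 0.
Proof.
  destruct hH1 as [eps [Heps HH1]].
  set (g := fun t i => gamma * X t (i + n)%nat).
  set (S := fun t => sqnorm n (g t)).
  set (L := fun t => - qform n (Qhat n Gm Q) (X t) + / gamma * S t).
  assert (Hgc : forall i t, (i < n)%nat -> continuous (fun s => g s i) t).
  { intros i t Hi; apply (continuous_mult (fun _ => gamma)); [apply continuous_const |].
    apply continuous_flow; lia. }
  assert (HL : forall t, flow_lagrangian t = L t).
  { intros t; unfold L, S, g, flow_lagrangian; rewrite sqnorm_scal; field; lra. }
  assert (exL : ex_RInt L 0 T).
  { apply (ex_RInt_ext flow_lagrangian); [intros; apply HL |].
    apply (@ex_RInt_continuous R_CompleteNormedModule); intros; apply continuous_flow_lagrangian. }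
  assert (exS : ex_RInt S 0 T).
  { apply (@ex_RInt_continuous R_CompleteNormedModule); intros; apply continuous_sqnorm; auto. }
  assert (HJ := HH1 g X
    (fun i Hi t => proj2 (continuity_pt_filterlim _ t) (Hgc i t Hi))
    (fun i t Hi => proj1 (is_derive_Reals _ _ _)
       (eq_ind _ (is_derive _ t) (X_derive i t ltac:(lia)) _
          (mat_vec_Hcal_top n A G Gm Q gamma (X t) i Hi)))
    state_0 (ex_RInt_Reals_0 _ _ _ exL) (ex_RInt_Reals_0 _ _ _ exS)).
  rewrite <- !RInt_Reals, <- (RInt_ext _ _ _ _ (fun t _ => HL t)), RInt_flow_lagrangian in HJ.
  fold S in HJ; fold S.
  destruct (Rle_or_lt (RInt S 0 T) 0); [auto | nra].
Qed.

Lemma H1_flow_costate_0 i : (i < n)%nat -> X 0 (i + n)%nat = 0.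
Proof.
  intros Hi.
  set (S := fun t => sqnorm n (fun i => gamma * X t (i + n)%nat)).
  assert (HSnn : forall t, 0 <= S t) by (intros; apply rsum_nonneg; intros; apply Rle_0_sqr).
  assert (HS0 : S 0 = 0).
  { destruct (Rle_lt_or_eq_dec _ _ (HSnn 0)) as [Hpos | <-]; [| reflexivity].
    assert (HSc : forall t, continuous S t)
      by (intros; apply continuous_sqnorm; intros; apply (continuous_mult (fun _ => gamma));
          [apply continuous_const | apply continuous_flow; lia]).
    pose proof (RInt_gt_0_of_pos_at_left S 0 T hT HSc HSnn Hpos).
    pose proof H1_flow_control_energy as Henergy; fold S in Henergy; lra. }
  assert (Hgi : (gamma * X 0 (i + n)%nat) * (gamma * X 0 (i + n)%nat) <= S 0)
    by (apply (rsum_term_le n (fun k => (gamma * X 0 (k + n)%nat) * (gamma * X 0 (k + n)%nat)));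
        auto; intros; apply Rle_0_sqr).
  rewrite HS0 in Hgi; apply (Rmult_eq_reg_l gamma); [| lra]; rewrite Rmult_0_r; nra.
Qed.

End HamiltonianFlow.

Module InjectiveNonsingular.
Import all_boot all_algebra Rstruct GRing.Theory.
Local Open Scope ring_scope.

Lemma rsum_big (m : nat) (f : nat -> R) : rsum m f = \sum_(k < m) f k.
Proof. by elim: m => [|m IH]; rewrite ?big_ord0 // big_ord_recr /= IH. Qed.

Lemma nonsingular_of_injective (n : nat) (K : mat) :
  (forall v : vec, (forall i, lt i n -> mat_vec n K v i = R0) -> forall j, lt j n -> v j = R0) ->
  nonsingular n K.
Proof.
move=> injK.
pose Km : 'M[R]_n := \matrix_(i < n, j < n) K i j.
pose ext (u : 'I_n -> R) : vec := fun k => oapp u 0 (insub k).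
have extE (u : 'I_n -> R) (k : 'I_n) : ext u k = u k by rewrite /ext valK.
have Km_unit : Km \in unitmx.
  rewrite -unitmx_tr -row_free_unit -kermx_eq0; apply/eqP/row_matrixP => i.
  have : row i (kermx Km^T) *m Km^T = 0 by apply/sub_kermxP; rewrite row_sub.
  rewrite row0; move: (row i _) => u uK.
  apply/rowP => j; rewrite !mxE -(extE (u 0) j); apply: injK; last exact/ltP.
  move=> i0 /ltP hi0; rewrite /mat_vec rsum_big.
  have := congr1 (fun M : 'M[R]_(1, n) => M 0 (Ordinal hi0)) uK.
  rewrite !mxE => uK0; apply: etrans uK0; apply: eq_bigr => k _.
  by rewrite !mxE extE mulrC.
exists (fun i j => ext (fun i' => ext (invmx Km i') j) i) => i j /ltP hi /ltP hj.
have delta_ord : delta i j = ((Ordinal hi == Ordinal hj)%:R : R).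
  rewrite /delta -[Ordinal hi == _]/(i == j).
  by case: (PeanoNat.Nat.eqb_spec i j) => [->|/eqP/negbTE ->]; rewrite ?eqxx.
have entry M := congr1 (fun M : 'M[R]_n => M (Ordinal hi) (Ordinal hj)) M.
rewrite /mat_mul !rsum_big delta_ord; split.
- have := entry _ _ (mulVmx Km_unit); rewrite !mxE => <-; apply: eq_bigr => k _.
  by rewrite mxE (extE _ (Ordinal hi)) extE.
- have := entry _ _ (mulmxV Km_unit); rewrite !mxE => <-; apply: eq_bigr => k _.
  by rewrite mxE extE (extE _ (Ordinal hj)).
Qed.

End InjectiveNonsingular.

Theorem proposition7 (n : nat) (T : R) (A G Gm : mat) (gamma : R) (Q H : mat)
  (hn : (1 <= n)%nat) (hT : 0 < T) (hgamma : 0 < gamma)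
  (hQs : symmetric n Q) (hQ : psd n Q) (hHs : symmetric n H) (hH : psd n H)
  (hH1 : H1 n T A G Gm gamma Q H) :
  nonsingular n
    (mat_sub (blk22 n (matexp (2 * n)%nat (Hcal n A G Gm Q gamma) T))
             (mat_mul n H (blk12 n (matexp (2 * n)%nat (Hcal n A G Gm Q gamma) T)))).
Proof.
  set (Hc := Hcal n A G Gm Q gamma).
  apply InjectiveNonsingular.nonsingular_of_injective; intros v Hv.
  set (X := fun t => mat_vec (2 * n) (matexp (2 * n) Hc t) (embed_bottom n v)).
  assert (HX : forall i t, (i < 2 * n)%nat ->
                 is_derive (fun s => X s i) t (mat_vec (2 * n) Hc (X t) i))
    by (intros; apply is_derive_matexp_vec; auto).
  assert (Hz0 : forall i, (i < n)%nat -> X 0 i = 0).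
  { intros i Hi; unfold X; rewrite matexp_vec_0 by lia; apply embed_bottom_top; auto. }
  assert (HpT : forall i, (i < n)%nat -> X T (i + n)%nat = mat_vec n H (X T) i).
  { intros i Hi; specialize (Hv i Hi); rewrite mat_vec_sub, mat_vec_mul in Hv.
    unfold X; rewrite mat_vec_embed_bottom.
    rewrite (mat_vec_ext n H _ (mat_vec n (blk12 n (matexp (2 * n) Hc T)) v))
      by (intros; apply mat_vec_embed_bottom).
    change (mat_vec n (blk22 n (matexp (2 * n) Hc T)) v i
            = mat_vec n H (mat_vec n (blk12 n (matexp (2 * n) Hc T)) v) i); lra. }
  intros j Hj.
  rewrite <- (embed_bottom_bottom n v j), <- (matexp_vec_0 (2 * n) Hc) by lia.
  exact (H1_flow_costate_0 n A G Gm Q gamma X HX T H Hz0 HpT hT hgamma hH1 j Hj).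
Qed.
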